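(* For every integer $j\geq 3$, the limit $\lim_{t\to-1}g_j(t)$ exists and is strictly negative.
   Context: $\omega_j$ is the surface area of $\mathbb{S}^{j-1}\subseteq\mathbb{R}^j$. The Berg functions $g_j\in C^\infty(-1,1)$, $j\ge2$, are defined by $g_2(t)=\frac{1}{2\pi}(\pi-\arccos t)(1-t^2)^{1/2}-\frac{1}{4\pi}t$, $g_3(t)=\frac{1}{2\pi}\big(1+t\log(1-t)+(\tfrac43-\log 2)t\big)$, $g_{j+2}(t)=\frac{j+1}{2\pi}g_j(t)+\frac{j+1}{2\pi(j-1)}t\,g_j'(t)+\frac{j+1}{2\pi\omega_j}t$. *)

From Stdlib Require Import Reals.
From Coquelicot Require Import Coquelicot.
Open Scope R_scope.

(* omega j = surface area of the unit sphere S^{j-1} in R^j, for j >= 1: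
   omega 1 = 2, omega 2 = 2*PI, omega (j+2) = 2*PI*omega j / j
   (equivalently omega j = 2 PI^{j/2} / Gamma(j/2)). omega 0 is a dummy value. *)
Fixpoint omega (j : nat) : R :=
  match j with
  | O => 0
  | S O => 2
  | S (S O) => 2 * PI
  | S (S k as m) => 2 * PI * omega k / INR k
  end.

Definition g2 (t : R) : R :=
  / (2 * PI) * (PI - acos t) * sqrt (1 - t ^ 2) - / (4 * PI) * t.

Definition g3 (t : R) : R :=
  / (2 * PI) * (1 + t * ln (1 - t) + (4 / 3 - ln 2) * t).

(* gk k = g_{k+2} (the Berg function of index k+2), via the recursion
   g_{j+2} = (j+1)/(2 PI) g_j + (j+1)/(2 PI (j-1)) t g_j' + (j+1)/(2 PI omega_j) t. *)
Fixpoint gk (k : nat) : R -> R :=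
  match k with
  | O => g2
  | S O => g3
  | S (S i) => fun t =>
      let j := INR (i + 2) in
      (j + 1) / (2 * PI) * gk i t
      + (j + 1) / (2 * PI * (j - 1)) * t * Derive (gk i) t
      + (j + 1) / (2 * PI * omega (i + 2)) * t
  end.

(* Berg function g_j, meaningful for j >= 2 and t in (-1,1). *)
Definition berg (j : nat) : R -> R := gk (j - 2).

(* Put x = t + 1.  For every j >= 2, f_j(x) := omega_j g_j(x - 1) is a power series
   with radius of convergence at least 2, so the limit of g_j at -1 is f_j(0) / omega_j.
   For j = 2, 3 the series is explicit (from the expansions of acos and ln at -1), and
   the recursion becomes f_(j+2) = (j+1)/j (f_j + (x - 1) f_j' / (j - 1) + x - 1).
   Each f_j moreover satisfies a second-order ODE which the recursion preserves; at x = 0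
   it gives f_j'(0) = j - f_j(0), hence
     f_(j+2)(0) = (j+1)/(j-1) (f_j(0) - 1) - (j+1)/j.
   As f_2(0) = 1/2 and f_3(0) = -2/3, induction gives f_j(0) < 1 for all j, and then
   f_j(0) < 0 for j >= 3. *)

From Stdlib Require Import Arith Reals Lra Lia.
From Coquelicot Require Import Coquelicot.
Open Scope R_scope.

Lemma CV_radius_ge_of_bounded (a : nat -> R) (r M : R) :
  (forall n, Rabs (a n * r ^ n) <= M) -> Rbar_le r (CV_radius a).
Proof. intros H; apply (proj1 (CV_radius_bounded a)); now exists M. Qed.

Lemma CV_radius_plus_ge (r : Rbar) (a b : nat -> R) :
  Rbar_le r (CV_radius a) -> Rbar_le r (CV_radius b) ->
  Rbar_le r (CV_radius (PS_plus a b)).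
Proof.
  intros Ha Hb; eapply Rbar_le_trans; [|apply CV_radius_plus].
  now apply Rbar_min_case.
Qed.

Lemma CV_radius_scal_ge (r : Rbar) (c : R) (a : nat -> R) :
  Rbar_le r (CV_radius a) -> Rbar_le r (CV_radius (PS_scal c a)).
Proof.
  intros H; destruct (Req_dec c 0) as [->|Hc]; [|now rewrite CV_radius_scal].
  rewrite (CV_radius_ext _ (fun _ => 0)), CV_radius_const_0.
  - now destruct r.
  - intros n; apply Rmult_0_l.
Qed.

Lemma CV_radius_minus_ge (r : Rbar) (a b : nat -> R) :
  Rbar_le r (CV_radius a) -> Rbar_le r (CV_radius b) ->
  Rbar_le r (CV_radius (PS_minus a b)).
Proof.
  intros Ha Hb; apply (CV_radius_plus_ge r a (PS_opp b)); [|rewrite CV_radius_opp]; assumption.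
Qed.

Definition PS_affine (c0 c1 : R) (n : nat) : R :=
  match n with O => c0 | 1%nat => c1 | _ => 0 end.

Lemma CV_radius_affine (c0 c1 : R) : CV_radius (PS_affine c0 c1) = p_infty.
Proof.
  rewrite <- 2!CV_radius_decr_1, <- CV_radius_const_0.
  now apply CV_radius_ext.
Qed.

Lemma PSeries_affine (c0 c1 x : R) : PSeries (PS_affine c0 c1) x = c0 + c1 * x.
Proof.
  assert (Hin : forall b, CV_radius b = p_infty -> ex_pseries b x).
  { intros b Hb; apply CV_radius_inside; now rewrite Hb. }
  rewrite PSeries_decr_1 by (apply Hin, CV_radius_affine).
  rewrite PSeries_decr_1 by (apply Hin; rewrite CV_radius_decr_1; apply CV_radius_affine).
  rewrite (PSeries_ext _ (fun _ => 0)), PSeries_const_0 by reflexivity.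
  cbn; ring.
Qed.

Ltac CV_radius_ge :=
  match goal with
  | |- Rbar_le _ (CV_radius (PS_plus _ _)) => apply CV_radius_plus_ge; CV_radius_ge
  | |- Rbar_le _ (CV_radius (PS_minus _ _)) => apply CV_radius_minus_ge; CV_radius_ge
  | |- Rbar_le _ (CV_radius (PS_scal _ _)) => apply CV_radius_scal_ge; CV_radius_ge
  | |- Rbar_le _ (CV_radius (PS_incr_1 _)) => rewrite CV_radius_incr_1; CV_radius_ge
  | |- Rbar_le _ (CV_radius (PS_derive _)) => rewrite CV_radius_derive; CV_radius_ge
  | |- Rbar_le ?r (CV_radius (PS_affine _ _)) => rewrite CV_radius_affine; now destruct r
  | |- _ => apply Rbar_le_refl || assumption
  end.

Ltac ex_pseries_inside r :=
  apply CV_radius_inside; apply (Rbar_lt_le_trans _ r); [assumption | CV_radius_ge].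

Ltac PS_simpl :=
  unfold PS_plus, PS_minus, PS_opp, PS_scal, PS_incr_1, PS_derive, PS_affine;
  cbn -[INR pow].

Lemma is_derive_PSeries_shift (a : nat -> R) (t : R) :
  Rbar_lt (Rabs (t + 1)) (CV_radius a) ->
  is_derive (fun s => PSeries a (s + 1)) t (PSeries (PS_derive a) (t + 1)).
Proof.
  intros Ht.
  assert (Hshift : is_derive (fun s : R => s + 1) t 1) by (auto_derive; auto; ring).
  generalize (is_derive_comp _ _ t _ _ (is_derive_PSeries a (t + 1) Ht) Hshift).
  change (scal 1 ?d) with (1 * d); now rewrite Rmult_1_l.
Qed.

Lemma filterlim_PSeries_shift (a : nat -> R) :
  Rbar_lt 0 (CV_radius a) ->
  filterlim (fun t => PSeries a (t + 1)) (locally (-1)) (locally (a O)).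
Proof.
  intros Ha.
  assert (Hc : continuity_pt (fun t => PSeries a (t + 1)) (-1)).
  { apply (continuity_pt_comp (fun t => t + 1)); [reg|].
    apply PSeries_continuity; replace (-1 + 1) with 0 by ring.
    now rewrite Rabs_R0. }
  apply continuity_pt_filterlim in Hc; cbv beta in Hc.
  now replace (-1 + 1) with 0 in Hc by ring; rewrite PSeries_0 in Hc.
Qed.

Lemma is_derive_0_const (f : R -> R) (a b x y : R) :
  (forall t, a < t < b -> is_derive f t 0) -> a < x < b -> a < y < b -> f x = f y.
Proof.
  intros Hd Hx Hy.
  destruct (Rtotal_order x y) as [Hxy|[->|Hxy]]; [| reflexivity |symmetry];
    apply eq_is_derive; auto; intros t Ht; apply Hd; lra.
Qed.

Lemma filterlim_PI_minus_acos :
  filterlim (fun t => PI - acos t) (at_right (-1)) (locally 0).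
Proof.
  apply (filterlim_locally (F := at_right (-1))).
  intros eps.
  set (e := Rmin eps (PI / 2)).
  assert (He : 0 < e <= PI / 2).
  { pose proof PI_RGT_0; pose proof (cond_pos eps).
    split; [apply Rmin_glb_lt; lra | apply Rmin_r]. }
  assert (Hcos : 0 <= cos e < 1).
  { pose proof PI_RGT_0. split.
    - apply cos_ge_0; lra.
    - rewrite <- cos_0; apply cos_decreasing_1; lra. }
  assert (Hd : 0 < 1 - cos e) by lra.
  exists (mkposreal _ Hd); intros t Ht Hgt; cbn in Ht.
  change (Rabs (t - -1) < 1 - cos e) in Ht.
  apply Rabs_def2 in Ht.
  assert (Hacos := acos_bound_lt t ltac:(lra)).
  assert (Hcos_t : cos (PI - acos t) = - t).
  { rewrite cos_minus, cos_PI, sin_PI, cos_acos by lra; ring. }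
  (* cos decreases on [0, PI], and cos (PI - acos t) = - t > cos e. *)
  assert (Hlt : PI - acos t < e).
  { apply Rnot_le_lt; intros Hle; destruct (Rle_lt_or_eq_dec _ _ Hle) as [Hlt|Heq].
    - assert (cos (PI - acos t) < cos e) by (apply cos_decreasing_1; lra); lra.
    - rewrite Heq in Ht; lra. }
  change (Rabs (PI - acos t - 0) < eps).
  rewrite Rminus_0_r, Rabs_right by lra.
  apply (Rlt_le_trans _ e); [exact Hlt | apply Rmin_l].
Qed.

Lemma at_right_m1_interval : at_right (-1) (fun t => -1 < t < 1).
Proof.
  exists (mkposreal 2 Rlt_0_2); intros t Ht Hgt; cbn in *.
  change (Rabs (t - -1) < 2) in Ht; apply Rabs_def2 in Ht; lra.
Qed.

Lemma filterlim_at_right_of_locally {U : Type} (f : R -> U) (x : R) (G : (U -> Prop) -> Prop) :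
  filterlim f (locally x) G -> filterlim f (at_right x) G.
Proof. apply filterlim_filter_le_1, filter_le_within. Qed.

Definition ln_coef (n : nat) : R :=
  match n with O => 0 | S m => - / (INR (S m) * 2 ^ S m) end.

Lemma CV_radius_ln_coef : Rbar_le 2 (CV_radius ln_coef).
Proof.
  apply (CV_radius_ge_of_bounded _ _ 1); intros [|m]; cbn -[INR pow].
  - rewrite Rmult_0_l, Rabs_R0; lra.
  - assert (Hm : 1 <= INR (S m)) by (apply (le_INR 1); lia).
    assert (H2 : 0 < 2 ^ S m) by (apply pow_lt; lra).
    replace (- / (INR (S m) * 2 ^ S m) * 2 ^ S m) with (- / INR (S m)) by (field; lra).
    rewrite Rabs_Ropp, Rabs_right by (apply Rle_ge, Rlt_le, Rinv_0_lt_compat; lra).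
    rewrite <- Rinv_1; apply Rinv_le_contravar; lra.
Qed.

Lemma PSeries_half_geom (x : R) : Rabs x < 2 -> PSeries (fun n => (/ 2) ^ n) x = / (1 - x / 2).
Proof.
  intros Hx; unfold PSeries; rewrite <- Series_geom.
  - apply Series_ext; intros n; change (scal (x ^ n) ((/ 2) ^ n)) with (x ^ n * (/ 2) ^ n).
    unfold Rdiv; rewrite Rpow_mult_distr; ring.
  - unfold Rdiv; rewrite Rabs_mult, (Rabs_right (/ 2)); lra.
Qed.

Lemma PSeries_ln_coef (x : R) : Rabs x < 2 -> PSeries ln_coef x = ln (1 - x / 2).
Proof.
  intros Hx.
  assert (Hderiv : forall y, -2 < y < 2 ->
    is_derive (fun y => PSeries ln_coef y - ln (1 - y / 2)) y 0).
  { intros y Hy.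
    assert (Hy' : Rbar_lt (Rabs y) (CV_radius ln_coef)).
    { eapply Rbar_lt_le_trans; [|apply CV_radius_ln_coef]; cbn; apply Rabs_def1; lra. }
    assert (Hgeom : PSeries (PS_derive ln_coef) y = - / (2 - y)).
    { rewrite (PSeries_ext _ (PS_scal (- / 2) (fun n => (/ 2) ^ n))).
      - rewrite PSeries_scal, PSeries_half_geom by (apply Rabs_def1; lra); field; lra.
      - intros n; PS_simpl.
        assert (H2 : 0 < 2 ^ n) by (apply pow_lt; lra).
        assert (Hn : INR (S n) <> 0) by (apply not_0_INR; lia).
        rewrite pow_inv; simpl pow; field; lra. }
    replace 0 with (- / (2 - y) - - / (2 - y)) by ring.
    apply (is_derive_minus (fun y => PSeries ln_coef y) (fun y => ln (1 - y / 2))).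
    - rewrite <- Hgeom; now apply is_derive_PSeries.
    - auto_derive; [lra | field; lra]. }
  apply Rabs_def2 in Hx.
  assert (Hconst := is_derive_0_const _ (-2) 2 x 0 Hderiv ltac:(lra) ltac:(lra)).
  cbv beta in Hconst; rewrite PSeries_0 in Hconst.
  replace (1 - 0 / 2) with 1 in Hconst by field.
  rewrite ln_1 in Hconst; cbn in Hconst; lra.
Qed.

Fixpoint acos_coef (n : nat) : R :=
  match n with O => 1 | S m => INR (S m) / (2 * INR (S m) + 1) * acos_coef m end.

Lemma acos_coef_bounds (n : nat) : 0 <= acos_coef n * 2 ^ n <= 1.
Proof.
  induction n as [|n IH]; [cbn; lra|].
  assert (Hn : 0 < INR (S n)) by (apply lt_0_INR; lia).
  assert (Hq : 0 <= 2 * INR (S n) / (2 * INR (S n) + 1) <= 1).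
  { split; [apply Rdiv_le_0_compat; lra|].
    apply (Rdiv_le_1 (2 * INR (S n)) (2 * INR (S n) + 1)); lra. }
  replace (acos_coef (S n) * 2 ^ S n)
    with (2 * INR (S n) / (2 * INR (S n) + 1) * (acos_coef n * 2 ^ n))
    by (cbn -[INR]; field; lra).
  split; [apply Rmult_le_pos|]; nra.
Qed.

Lemma CV_radius_acos_coef : Rbar_le 2 (CV_radius acos_coef).
Proof.
  apply (CV_radius_ge_of_bounded _ _ 1); intros n.
  destruct (acos_coef_bounds n); rewrite Rabs_right; lra.
Qed.

Lemma PSeries_acos_coef_ode (x : R) : Rabs x < 2 ->
  x * (2 - x) * PSeries (PS_derive acos_coef) x = 1 + (x - 1) * PSeries acos_coef x.
Proof.
  intros Hx.
  assert (HU := CV_radius_acos_coef).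
  assert (Hcoef : forall n,
    PS_minus (PS_plus (PS_scal 2 (PS_incr_1 (PS_derive acos_coef))) acos_coef)
      (PS_plus (PS_incr_1 (PS_incr_1 (PS_derive acos_coef))) (PS_incr_1 acos_coef)) n
    = PS_affine 1 0 n).
  { intros [|[|m]]; PS_simpl; [ring | simpl; field |].
    assert (Hm := pos_INR m); rewrite !S_INR; field; lra. }
  assert (E := PSeries_ext _ _ x Hcoef); rewrite PSeries_affine, Rmult_0_l, Rplus_0_r in E.
  rewrite PSeries_minus, !PSeries_plus, PSeries_scal, !PSeries_incr_1 in E;
    try ex_pseries_inside (Finite 2).
  rewrite <- E at 1; ring.
Qed.

Lemma is_derive_PI_minus_acos (t : R) : -1 < t < 1 ->
  is_derive (fun s => PI - acos s) t (/ sqrt (1 - t ^ 2)).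
Proof.
  intros Ht; apply is_derive_Reals.
  replace (/ sqrt (1 - t ^ 2)) with (0 - -1 / sqrt (1 - t²)).
  - apply derivable_pt_lim_minus; [apply derivable_pt_lim_const|].
    apply (derive_pt_eq_1 _ _ _ (derivable_pt_acos t Ht)), derive_pt_acos.
  - assert (0 < sqrt (1 - t²)) by (apply sqrt_lt_R0; unfold Rsqr; nra).
    unfold Rsqr in *; replace (t ^ 2) with (t * t) by ring; field; lra.
Qed.

Lemma is_derive_sqrt_acos_coef (t : R) : -1 < t < 1 ->
  is_derive (fun s => sqrt (1 - s ^ 2) * PSeries acos_coef (s + 1)) t (/ sqrt (1 - t ^ 2)).
Proof.
  intros Ht.
  assert (Hpos : 0 < 1 - t ^ 2) by nra.
  assert (Hsqrt : 0 < sqrt (1 - t ^ 2)) by now apply sqrt_lt_R0.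
  assert (Hx : Rabs (t + 1) < 2) by (rewrite Rabs_right; lra).
  assert (Hd_sqrt : is_derive (fun s => sqrt (1 - s ^ 2)) t (- t / sqrt (1 - t ^ 2))).
  { auto_derive; [nra|]. replace (1 + - (t * (t * 1))) with (1 - t ^ 2) by ring; field; lra. }
  assert (Hd_ps := is_derive_PSeries_shift acos_coef t
    (Rbar_lt_le_trans (Rabs (t + 1)) 2 _ Hx CV_radius_acos_coef)).
  assert (Hode := PSeries_acos_coef_ode (t + 1) Hx).
  replace ((t + 1) * (2 - (t + 1))) with (sqrt (1 - t ^ 2) * sqrt (1 - t ^ 2)) in Hode
    by (rewrite sqrt_sqrt; [ring | lra]).
  replace (/ sqrt (1 - t ^ 2))
    with (- t / sqrt (1 - t ^ 2) * PSeries acos_coef (t + 1)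
          + sqrt (1 - t ^ 2) * PSeries (PS_derive acos_coef) (t + 1)).
  - exact (is_derive_mult _ _ t _ _ Hd_sqrt Hd_ps Rmult_comm).
  - assert (Hd_ps_val : sqrt (1 - t ^ 2) * PSeries (PS_derive acos_coef) (t + 1)
                        = (1 + t * PSeries acos_coef (t + 1)) / sqrt (1 - t ^ 2)).
    { apply (Rmult_eq_reg_l (sqrt (1 - t ^ 2))); [|lra].
      rewrite <- Rmult_assoc, Hode; field; lra. }
    rewrite Hd_ps_val; field; lra.
Qed.

(* Both sides have derivative 1 / sqrt (1 - t^2) on (-1, 1) and tend to 0 at -1. *)
Lemma PI_minus_acos_expansion (t : R) : -1 < t < 1 ->
  PI - acos t = sqrt (1 - t ^ 2) * PSeries acos_coef (t + 1).
Proof.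
  set (V := fun s => sqrt (1 - s ^ 2) * PSeries acos_coef (s + 1)).
  set (C := PI - acos 0 - V 0).
  assert (HC : forall s, -1 < s < 1 -> PI - acos s = V s + C).
  { intros s Hs.
    assert (Hd : forall y, -1 < y < 1 -> is_derive (fun y => PI - acos y - V y) y 0).
    { intros y Hy; rewrite <- (Rminus_diag_eq (/ sqrt (1 - y ^ 2)) _ eq_refl).
      apply (is_derive_minus (fun y => PI - acos y) V);
        [apply is_derive_PI_minus_acos | apply is_derive_sqrt_acos_coef]; exact Hy. }
    assert (H := is_derive_0_const _ (-1) 1 s 0 Hd Hs ltac:(lra)).
    unfold C; cbv beta in H; lra. }
  assert (HV : continuity_pt (fun s => V s + C) (-1)).
  { apply continuity_pt_plus; [|apply continuity_pt_const; intros ? ?; reflexivity].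
    apply continuity_pt_mult.
    - apply (continuity_pt_comp (fun s => 1 - s ^ 2)); [reg|].
      apply continuity_pt_sqrt; lra.
    - apply (continuity_pt_comp (fun s => s + 1)); [reg|].
      apply PSeries_continuity; replace (-1 + 1) with 0 by ring; rewrite Rabs_R0.
      eapply Rbar_lt_le_trans; [|apply CV_radius_acos_coef]; cbn; lra. }
  apply continuity_pt_filterlim in HV.
  replace (V (-1) + C) with C in HV
    by (unfold V; replace (1 - (-1) ^ 2) with 0 by ring; rewrite sqrt_0; ring).
  apply filterlim_at_right_of_locally in HV.
  assert (Hlim_0 : filterlim (fun s => V s + C) (at_right (-1)) (locally 0)).
  { apply (filterlim_ext_loc (fun s => PI - acos s)); [|exact filterlim_PI_minus_acos].
    generalize at_right_m1_interval; apply filter_imp; exact HC. }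
  assert (HC0 : C = 0) by exact (filterlim_locally_unique _ _ _ HV Hlim_0).
  intros Ht; rewrite HC, HC0 by exact Ht; unfold V; ring.
Qed.

(* Coefficientwise form of x (2 - x) f'' + (j - 1) (1 - x) f' + (j - 1) f = j (j - 1) (1 - x). *)
Definition coef_ode (j : R) (a : nat -> R) : Prop :=
  forall n, (INR n + 1) * (2 * INR n + j - 1) * a (S n)
            = (INR n - 1) * (INR n + j - 1) * a n + j * (j - 1) * PS_affine 1 (-1) n.

(* With f(x) = omega_j g_j(x - 1), this is the series of omega_(j+2) g_(j+2)(x - 1),
   by the recursion for g_(j+2) and omega_(j+2) = 2 PI omega_j / j. *)
Definition berg_step (j : R) (a : nat -> R) : nat -> R :=
  PS_scal ((j + 1) / j)
    (PS_plus a
       (PS_plus (PS_scal (/ (j - 1)) (PS_minus (PS_incr_1 (PS_derive a)) (PS_derive a)))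
          (PS_affine (-1) 1))).

Lemma berg_step_coef (j : R) (a : nat -> R) (n : nat) :
  berg_step j a n
  = (j + 1) / j * (a n + (INR n * a n - INR (S n) * a (S n)) / (j - 1) + PS_affine (-1) 1 n).
Proof. unfold berg_step; destruct n; PS_simpl; unfold Rdiv; simpl INR; ring. Qed.

Lemma CV_radius_berg_step (r : Rbar) (j : R) (a : nat -> R) :
  Rbar_le r (CV_radius a) -> Rbar_le r (CV_radius (berg_step j a)).
Proof. intros; unfold berg_step; CV_radius_ge. Qed.

Lemma PSeries_berg_step (j : R) (a : nat -> R) (x : R) :
  Rbar_lt (Rabs x) (CV_radius a) ->
  PSeries (berg_step j a) x
  = (j + 1) / j * (PSeries a x + (x - 1) * PSeries (PS_derive a) x / (j - 1) + (x - 1)).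
Proof.
  intros Hx; unfold berg_step.
  rewrite PSeries_scal, !PSeries_plus, PSeries_scal, PSeries_minus, PSeries_incr_1,
    PSeries_affine; try ex_pseries_inside (CV_radius a).
  unfold Rdiv; ring.
Qed.

Lemma berg_step_ode (j : R) (a : nat -> R) :
  1 < j -> coef_ode j a -> coef_ode (j + 2) (berg_step j a).
Proof.
  intros Hj Hode n.
  assert (HN := pos_INR n); set (N := INR n) in *.
  assert (H0 := Hode n); assert (H1 := Hode (S n)); fold N in H0.
  rewrite !berg_step_coef, !S_INR in *; fold N in H1 |- *.
  assert (Ea1 : a (S n) = ((N - 1) * (N + j - 1) * a n + j * (j - 1) * PS_affine 1 (-1) n)
                          / ((N + 1) * (2 * N + j - 1))).
  { rewrite <- H0; field; split; nra. }
  assert (Ea2 : a (S (S n)) = ((N + 1 - 1) * (N + 1 + j - 1) * a (S n)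
                               + j * (j - 1) * PS_affine 1 (-1) (S n))
                              / ((N + 1 + 1) * (2 * (N + 1) + j - 1))).
  { rewrite <- H1; field; split; nra. }
  rewrite Ea2, Ea1.
  destruct n as [|[|m]]; cbn [PS_affine]; [subst N; simpl INR .. |]; field; repeat split; nra.
Qed.

Lemma berg_step_0_neg (j : R) (a : nat -> R) :
  1 < j -> coef_ode j a -> a O < 1 -> berg_step j a O < 0.
Proof.
  intros Hj Hode Ha0.
  assert (Ha1 : a 1%nat = j - a O).
  { assert (H := Hode O); simpl INR in H; cbn [PS_affine] in H.
    apply (Rmult_eq_reg_l (j - 1)); lra. }
  rewrite berg_step_coef, Ha1; simpl INR; cbn [PS_affine].
  replace ((j + 1) / j * (a O + (0 * a O - 1 * (j - a O)) / (j - 1) + -1))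
    with ((j + 1) / (j - 1) * (a O - 1) - (j + 1) / j) by (field; lra).
  assert (0 < (j + 1) / (j - 1)) by (apply Rdiv_lt_0_compat; lra).
  assert (0 < (j + 1) / j) by (apply Rdiv_lt_0_compat; lra).
  nra.
Qed.

Lemma omega_SS (k : nat) : (1 <= k)%nat -> omega (S (S k)) = 2 * PI * omega k / INR k.
Proof. intros Hk; destruct k as [|k]; [lia | reflexivity]. Qed.

Lemma omega_pos (j : nat) : (1 <= j)%nat -> 0 < omega j.
Proof.
  assert (H : forall k, 0 < omega (S k) /\ 0 < omega (S (S k))).
  { pose proof PI_RGT_0.
    induction k as [|k [IH1 IH2]]; [cbn; lra|].
    split; [exact IH2|]; rewrite omega_SS by lia.
    assert (0 < INR (S k)) by (apply lt_0_INR; lia).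
    apply Rdiv_lt_0_compat; nra. }
  intros Hj; destruct j as [|j]; [lia | apply H].
Qed.

Definition berg_expansion (i : nat) (a : nat -> R) : Prop :=
  Rbar_le 2 (CV_radius a) /\
  (forall t, -1 < t < 1 -> omega (i + 2) * gk i t = PSeries a (t + 1)) /\
  coef_ode (INR (i + 2)) a.

Lemma berg_expansion_gk (i : nat) (a : nat -> R) (t : R) :
  berg_expansion i a -> -1 < t < 1 -> gk i t = / omega (i + 2) * PSeries a (t + 1).
Proof.
  intros (_ & Hg & _) Ht.
  assert (Hom : 0 < omega (i + 2)) by (apply omega_pos; lia).
  rewrite <- Hg by exact Ht; field; lra.
Qed.

Lemma filterlim_berg_expansion (i : nat) (a : nat -> R) :
  berg_expansion i a -> filterlim (gk i) (at_right (-1)) (locally (/ omega (i + 2) * a O)).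
Proof.
  intros Hexp.
  apply (filterlim_ext_loc (fun t => / omega (i + 2) * PSeries a (t + 1))).
  - apply (filter_imp (fun t => -1 < t < 1)); [|exact at_right_m1_interval].
    intros t Ht; symmetry; exact (berg_expansion_gk i a t Hexp Ht).
  - apply filterlim_at_right_of_locally.
    apply (filterlim_comp _ _ _ (fun t => PSeries a (t + 1)) (fun y => / omega (i + 2) * y)
             _ (locally (a O))).
    + apply filterlim_PSeries_shift, (Rbar_lt_le_trans _ 2); [cbn; lra | apply Hexp].
    + exact (filterlim_scal_r _ _).
Qed.

Lemma berg_expansion_step (i : nat) (a : nat -> R) :
  berg_expansion i a -> berg_expansion (S (S i)) (berg_step (INR (i + 2)) a).
Proof.
  intros Hexp; pose proof Hexp as (Ha & _ & Hode).
  set (j := INR (i + 2)).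
  assert (Hj : 1 < j) by (unfold j; rewrite plus_INR; simpl; pose proof (pos_INR i); lra).
  assert (Hom : 0 < omega (i + 2)) by (apply omega_pos; lia).
  split; [|split].
  - now apply CV_radius_berg_step.
  - assert (Hg_inv := fun t => berg_expansion_gk i a t Hexp).
    intros t Ht.
    assert (Hx : Rbar_lt (Rabs (t + 1)) (CV_radius a)).
    { apply (Rbar_lt_le_trans _ 2); [cbn; rewrite Rabs_right; lra | exact Ha]. }
    assert (Hg'_t : Derive (gk i) t = / omega (i + 2) * PSeries (PS_derive a) (t + 1)).
    { apply is_derive_unique.
      apply (is_derive_ext_loc (fun s => / omega (i + 2) * PSeries a (s + 1))).
      - apply (filter_imp (fun s => -1 < s < 1)); [intros s Hs; now rewrite Hg_inv|].
        exact (open_and _ _ (open_gt (-1)) (open_lt 1) t Ht).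
      - now apply is_derive_scal, is_derive_PSeries_shift. }
    cbn [gk]; rewrite Hg_inv, Hg'_t by exact Ht.
    replace (S (S i) + 2)%nat with (S (S (i + 2))) by lia.
    rewrite omega_SS, PSeries_berg_step by (lia || exact Hx); fold j.
    pose proof PI_RGT_0; field; repeat split; lra.
  - replace (INR (S (S i) + 2)) with (j + 2)
      by (unfold j; rewrite !plus_INR, !S_INR; ring).
    now apply berg_step_ode.
Qed.

(* omega_2 g_2(x - 1) = x (2 - x) U(x) + (1 - x) / 2, U the series of acos_coef. *)
Definition berg2_coef : nat -> R :=
  PS_plus (PS_minus (PS_scal 2 (PS_incr_1 acos_coef)) (PS_incr_1 (PS_incr_1 acos_coef)))
    (PS_affine (1 / 2) (-1 / 2)).

Lemma berg_expansion_g2 : berg_expansion 0 berg2_coef.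
Proof.
  assert (HU := CV_radius_acos_coef).
  split; [|split].
  - unfold berg2_coef; CV_radius_ge.
  - intros t Ht; cbn [gk]; unfold g2, berg2_coef.
    replace (omega (0 + 2)) with (2 * PI) by reflexivity.
    assert (Hx : Rabs (t + 1) < 2) by (rewrite Rabs_right; lra).
    rewrite PSeries_plus, PSeries_minus, PSeries_scal, !PSeries_incr_1, PSeries_affine;
      try ex_pseries_inside (Finite 2).
    rewrite PI_minus_acos_expansion by exact Ht.
    assert (Hsq : sqrt (1 - t ^ 2) * sqrt (1 - t ^ 2) = 1 - t ^ 2) by (apply sqrt_sqrt; nra).
    pose proof PI_RGT_0.
    transitivity (sqrt (1 - t ^ 2) * sqrt (1 - t ^ 2) * PSeries acos_coef (t + 1) - t / 2).
    + field; lra.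
    + rewrite Hsq; field.
  - replace (INR (0 + 2)) with 2 by (cbn; ring).
    intros [|[|m]]; unfold berg2_coef; PS_simpl; [simpl INR; field .. |].
    assert (Hm := pos_INR m); rewrite !S_INR; field; lra.
Qed.

(* omega_3 g_3(x - 1) = 2 (x - 1) ln (1 - x / 2) + (8 x - 2) / 3. *)
Definition berg3_coef : nat -> R :=
  PS_plus (PS_scal 2 (PS_minus (PS_incr_1 ln_coef) ln_coef)) (PS_affine (-2 / 3) (8 / 3)).

Lemma berg_expansion_g3 : berg_expansion 1 berg3_coef.
Proof.
  assert (HL := CV_radius_ln_coef).
  split; [|split].
  - unfold berg3_coef; CV_radius_ge.
  - intros t Ht; cbn [gk]; unfold g3, berg3_coef.
    replace (omega (1 + 2)) with (4 * PI) by (cbn; field).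
    assert (Hx : Rabs (t + 1) < 2) by (rewrite Rabs_right; lra).
    rewrite PSeries_plus, PSeries_scal, PSeries_minus, PSeries_incr_1, PSeries_affine,
      PSeries_ln_coef by (exact Hx || ex_pseries_inside (Finite 2)).
    replace (1 - t) with (2 * (1 - (t + 1) / 2)) by field.
    rewrite ln_mult by lra.
    pose proof PI_RGT_0; field; lra.
  - replace (INR (1 + 2)) with 3 by (cbn; ring).
    intros [|[|m]]; unfold berg3_coef, ln_coef; PS_simpl; [simpl INR; field .. |].
    assert (Hm := pos_INR m); assert (0 < 2 ^ m) by (apply pow_lt; lra).
    rewrite !S_INR; simpl pow; field; lra.
Qed.

Lemma berg_expansion_exists (i : nat) :
  exists a, berg_expansion i a /\ a O < 1 /\ ((1 <= i)%nat -> a O < 0).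
Proof.
  induction i as [[|[|i]] IH] using lt_wf_ind.
  - exists berg2_coef; split; [exact berg_expansion_g2 | split; [cbn; lra | lia]].
  - exists berg3_coef; split; [exact berg_expansion_g3 | cbn; lra].
  - destruct (IH i ltac:(lia)) as (a & Ha & Ha0 & _).
    assert (Hj : 1 < INR (i + 2)) by (rewrite plus_INR; simpl; pose proof (pos_INR i); lra).
    assert (Hneg := berg_step_0_neg _ _ Hj (proj2 (proj2 Ha)) Ha0).
    exists (berg_step (INR (i + 2)) a).
    split; [now apply berg_expansion_step | split; [lra | intros _; exact Hneg]].
Qed.

Theorem lemma4p6 :
  forall j : nat, (3 <= j)%nat ->
    exists l : R,
      filterlim (berg j) (at_right (-1)) (locally l) /\ l < 0.
Proof.
  intros j Hj.
  destruct (berg_expansion_exists (j - 2)) as (a & Hexp & _ & Ha0).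
  exists (/ omega (j - 2 + 2) * a O); split.
  - exact (filterlim_berg_expansion _ _ Hexp).
  - assert (0 < / omega (j - 2 + 2)) by (apply Rinv_0_lt_compat, omega_pos; lia).
    assert (a O < 0) by (apply Ha0; lia).
    nra.
Qed.
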